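(* Let $n\ge1$ and let $U\subseteq\mathbb{R}^{1\times n}$ be a non-empty open set. For every sequence of nowhere constant continuous functions $f_k:U\to\mathbb{R}^{1\times n}$, $k\ge1$, the set $$\bigcap_{k\ge1}f_k^{-1}(\mathscr{L}^{*}_{1,n})\cap\mathscr{L}_{1,n}$$ is a dense $G_\delta$ subset of $U$. In particular there is a dense $G_\delta$ set $\Lambda\subseteq\mathscr{L}_{1,n}\cap U$ (dense in $U$) with $f_k(A)\in\mathscr{L}^*_{1,n}$ for all $A\in\Lambda$ and all $k\ge1$.
   Context: $\Vert\cdot\Vert$ is the supremum norm; a real $m\times n$ matrix $A$ is a Liouville matrix if $A\mathbf{q}-\mathbf{p}\neq\mathbf{0}$ for all nonzero $(\mathbf{q},\mathbf{p})\in\mathbb{Z}^n\times\mathbb{Z}^m$ and for every $N$ there exist $\mathbf{p}\in\mathbb{Z}^m$, $\mathbf{q}\in\mathbb{Z}^n\setminus\{\mathbf{0}\}$ with $\Vert A\mathbf{q}-\mathbf{p}\Vert<\Vert\mathbf{q}\Vert^{-N}$; $\mathscr{L}_{m,n}$ is the set of these. $\mathscr{L}^*_{m,n}$ is the set of $A\in\mathbb{R}^{m\times n}\setminus\mathbb{Q}^{m\times n}$ such that for every $N$ there exist $\mathbf{p}\in\mathbb{Z}^m$, $\mathbf{q}\in\mathbb{Z}^n\setminus\{\mathbf{0}\}$ with $\Vert A\mathbf{q}-\mathbf{p}\Vert<\Vert\mathbf{q}\Vert^{-N}$. A function on an open set $U$ is nowhere constant if it is not constant on any non-empty open subset of $U$.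 $\mathbb{R}^{1\times n}\cong\mathbb{R}^n$. *)

From HB Require Import structures.
From mathcomp Require Import all_boot all_order all_algebra.
From mathcomp Require Import all_classical all_reals all_analysis.
From mathcomp Require Import borel_hierarchy.
Set Implicit Arguments. Unset Strict Implicit. Unset Printing Implicit Defensive.
Import Order.TTheory GRing.Theory Num.Theory.
Import numFieldNormedType.Exports.
Local Open Scope classical_set_scope.
Local Open Scope ring_scope.

Definition supnorm {R : realType} {m : nat} (v : 'cV[R]_m) : R :=
  \big[Num.max/0]_(i < m) `|v i 0|.

Definition zvec {R : realType} {m : nat} (q : 'cV[int]_m) : 'cV[R]_m :=
  map_mx (fun z : int => z%:~R) q.

Definition approx_err {R : realType} {m n : nat} (A : 'M[R]_(m, n))
  (q : 'cV[int]_n) (p : 'cV[int]_m) : 'cV[R]_m :=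
  A *m zvec q - zvec p.

Definition is_rational {R : realType} (x : R) : Prop := exists r : rat, x = ratr r.

Definition Liouville {R : realType} {m n : nat} (A : 'M[R]_(m, n)) : Prop :=
  (forall (q : 'cV[int]_n) (p : 'cV[int]_m),
      (q != 0) || (p != 0) -> approx_err A q p != 0) /\
  (forall N : nat, exists (p : 'cV[int]_m) (q : 'cV[int]_n),
      q != 0 /\ supnorm (approx_err A q p) < supnorm (zvec q : 'cV[R]_n) ^- N).

Definition Liouville_star {R : realType} {m n : nat} (A : 'M[R]_(m, n)) : Prop :=
  (~ forall i j, is_rational (A i j)) /\
  (forall N : nat, exists (p : 'cV[int]_m) (q : 'cV[int]_n),
      q != 0 /\ supnorm (approx_err A q p) < supnorm (zvec q : 'cV[R]_n) ^- N).

Definition nowhere_constant {T' : Type} {tT : topologicalType}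
  (U : set tT) (f : tT -> T') : Prop :=
  forall V : set tT, open V -> V !=set0 -> V `<=` U ->
    exists x y, V x /\ V y /\ f x <> f y.

From HB Require Import structures.
From mathcomp Require Import all_boot all_order all_algebra.
From mathcomp Require Import all_classical all_reals all_analysis.
From mathcomp Require Import borel_hierarchy.
From mathcomp Require Import lra.
Import Order.TTheory GRing.Theory Num.Theory.
Import numFieldNormedType.Exports.
Local Open Scope classical_set_scope.
Local Open Scope ring_scope.

(* Each of the countably many conditions defining the set (A q <> p for a
   given (q, p); an approximation of quality N of A, or of f_k A; f_k A not a
   given rational row) cuts out a set that is open and dense in U.  Density of
   the approximation conditions: a continuous nowhere constant g varies along
   some segment in any open set, so by the intermediate value theorem one of
   its coordinates g_j takes a rational value P / M there, and at that point
   the integer vector M e_j approximates g exactly.  The Baire category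
   theorem, applied inside the open set U, concludes. *)

Set Implicit Arguments. Unset Strict Implicit. Unset Printing Implicit Defensive.

Section Baire_open.
Variables (R : realType) (T : completeNormedModType R) (U : set T).
Hypothesis oU : open U.

Lemma Baire_open_subset (G : nat -> set T) :
  (forall k, open (U `&` G k)) ->
  (forall k V, open V -> V !=set0 -> V `<=` U -> V `&` G k !=set0) ->
  Gdelta (U `&` \bigcap_k G k) /\ U `<=` closure (U `&` \bigcap_k G k).
Proof.
move=> oG dG; rewrite -bigcapIr //; split; first by exists (fun k => U `&` G k).
pose F k := U `&` G k `|` ~` closure U.
have odF k : open (F k) /\ dense (F k).
  split; first by apply: openU => //; exact/closed_openC/closed_closure.
  move=> O [z Oz] oO; have [OU|nOU] := pselect ((O `&` U) !=set0).
    have [x [[Ox Ux] Gx]] := dG k _ (openI oO oU) OU (@subIsetr _ _ _).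
    by exists x; split => //; left.
  exists z; split => //; right => Uz; apply: nOU.
  by rewrite setIC; apply: Uz; move: oO; rewrite openE; apply.
move=> x Ux B; rewrite nbhsE => -[W [oW Wx] WB].
have [y [[Wy Uy] Fy]] := Baire odF (ex_intro _ x (conj Wx Ux)) (openI oW oU).
exists y; split; last exact: WB.
by move=> k _; case: (Fy k Logic.I) => // /(_ (subset_closure Uy)).
Qed.

Lemma Baire_open_subset_countable (I : countType) (G : I -> set T) :
  (forall i, open (U `&` G i)) ->
  (forall i V, open V -> V !=set0 -> V `<=` U -> V `&` G i !=set0) ->
  Gdelta (U `&` \bigcap_i G i) /\ U `<=` closure (U `&` \bigcap_i G i).
Proof.
move=> oG dG; pose G' k := if @unpickle I k is Some i then G i else setT.
have -> : \bigcap_i G i = \bigcap_k G' k.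
  apply/seteqP; split => [x Gx k _|x Gx i _]; rewrite /G'.
    by case: unpickle => // i; exact: Gx.
  by have := Gx (pickle i) Logic.I; rewrite /G' pickleK.
apply: Baire_open_subset => [k|k V oV V0 VU]; rewrite /G'; case: unpickle => [i|].
- exact: oG.
- by rewrite setIT.
- exact: dG.
- by rewrite setIT; case: V0 => x Vx; exists x.
Qed.

End Baire_open.

Lemma nowhere_constant_sub (T' : Type) (T : topologicalType) (U V : set T)
    (g : T -> T') :
  V `<=` U -> nowhere_constant U g -> nowhere_constant V g.
Proof. by move=> VU gU W oW W0 WV; apply: gU => //; exact: subset_trans VU. Qed.

Lemma nowhere_constant_avoid (T' : Type) (T : topologicalType) (V : set T)
    (g : T -> T') c :
  nowhere_constant V g -> open V -> V !=set0 -> exists2 x, V x & g x <> c.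
Proof.
move=> gV oV V0; have [x [y [Vx [Vy gxy]]]] := gV V oV V0 (@subset_refl _ _).
have [gxc|] := pselect (g x = c); last by exists x.
by exists y => // gyc; apply: gxy; rewrite gxc gyc.
Qed.

Lemma open_setC1 (T : topologicalType) (x : T) :
  hausdorff_space T -> open (~` [set x]).
Proof.
by move=> hT; exact/closed_openC/accessible_closed_set1/hausdorff_accessible.
Qed.

Lemma exists_mx_neq (T : eqType) m n (A B : 'M[T]_(m, n)) :
  A != B -> exists i j, A i j != B i j.
Proof.
move=> /eqP AB; apply: contra_notP AB => nAB; apply/matrixP => i j.
by apply/eqP/negPn/negP => AijB; apply: nAB; exists i, j.
Qed.

Section row_approximation.
Variables (R : realType) (n : nat).
Implicit Types (B : 'rV[R]_n) (q : 'cV[int]_n) (p : 'cV[int]_1).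

Lemma norm_coord_le_supnorm m (v : 'cV[R]_m) i : `|v i 0| <= supnorm v.
Proof. by apply/bigmax_geP; right; exists i. Qed.

Lemma supnorm_cV1 (v : 'cV[R]_1) : supnorm v = `|v 0 0|.
Proof. by rewrite /supnorm big_ord_recl big_ord0 max_l. Qed.

Definition dotz B q : R := \sum_k B 0 k * (q k 0)%:~R.

Lemma approx_err_row B q p : approx_err B q p = (dotz B q - (p 0 0)%:~R)%:M.
Proof.
apply/matrixP => i j; rewrite !ord1 !mxE eqxx mulr1n; congr (_ - _).
by apply: eq_bigr => k _; rewrite mxE.
Qed.

Lemma supnorm_approx_err_row B q p :
  supnorm (approx_err B q p) = `|dotz B q - (p 0 0)%:~R|.
Proof. by rewrite supnorm_cV1 approx_err_row mxE eqxx mulr1n. Qed.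

Lemma approx_err_row_eq0 B q p :
  (approx_err B q p == 0) = (dotz B q == (p 0 0)%:~R).
Proof.
rewrite approx_err_row -[dotz B q == _]subr_eq0.
apply/eqP/eqP => [E|->]; last by rewrite raddf0.
by have := congr1 (fun A : 'M[R]_1 => A 0 0) E; rewrite !mxE eqxx mulr1n.
Qed.

Lemma continuous_dotz q : continuous (dotz^~ q).
Proof.
apply: continuous_big => [|k _]; first exact: add_continuous.
by move=> B; apply: (@cvgMl _ _ (nbhs B)); exact: coord_continuous.
Qed.

Lemma open_approx_err_neq0 q p :
  open [set B : 'rV[R]_n | approx_err B q p != 0].
Proof.
rewrite (_ : [set B | _] = dotz^~ q @^-1` [set x | x != (p 0 0)%:~R]); last first.
  by apply/seteqP; split=> B /=; rewrite approx_err_row_eq0.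
by have /continuousP := @continuous_dotz q; apply; exact: open_neq.
Qed.

Lemma dotzD B C q : dotz (B + C) q = dotz B q + dotz C q.
Proof. by rewrite /dotz -big_split; apply: eq_bigr => k _; rewrite mxE mulrDl. Qed.

Lemma dotzZ t B q : dotz (t *: B) q = t * dotz B q.
Proof. by rewrite /dotz mulr_sumr; apply: eq_bigr => k _; rewrite mxE mulrA. Qed.

Lemma dotz_delta_mxl j q : dotz (delta_mx 0 j) q = (q j 0)%:~R.
Proof.
rewrite /dotz (bigD1 j) //= big1 => [|k kj]; first by rewrite mxE !eqxx mul1r addr0.
by rewrite mxE (negbTE kj) andbF mul0r.
Qed.

Lemma dotz_delta_mxr B j (M : int) :
  dotz B (M *: delta_mx j 0) = B 0 j * M%:~R.
Proof.
rewrite /dotz (bigD1 j) //= big1 => [|k kj]; first by rewrite !mxE !eqxx mulr1 addr0.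
by rewrite !mxE (negbTE kj) mulr0 mulr0.
Qed.

Definition good_approx (N : nat) B := exists p q,
  q != 0 /\ supnorm (approx_err B q p) < supnorm (zvec q : 'cV[R]_n) ^- N.

Lemma open_good_approx N : open (good_approx N).
Proof.
rewrite openE => B [p [q [q0]]]; rewrite supnorm_approx_err_row distrC.
set e := _ ^- N => Bqp.
have : open (dotz^~ q @^-1` ball ((p 0 0)%:~R : R) e).
  by have /continuousP := @continuous_dotz q; apply; exact: ball_open.
rewrite openE => /(_ B); rewrite /= -ball_normE; move/(_ Bqp).
apply: filterS => C /= Cqp; exists p, q; split => //.
by rewrite supnorm_approx_err_row distrC.
Qed.

Lemma good_approx_exact N B q p :
  q != 0 -> dotz B q = (p 0 0)%:~R -> good_approx N B.
Proof.
move=> q0 Bqp; exists p, q; split => //.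
rewrite supnorm_approx_err_row Bqp subrr normr0 invr_gt0 exprn_gt0 //.
have [i [j qij]] := exists_mx_neq q0; rewrite !ord1 mxE in qij *.
apply: lt_le_trans (norm_coord_le_supnorm _ i).
by rewrite mxE normr_gt0 intr_eq0.
Qed.

End row_approximation.

Lemma ball_segment (R : realFieldType) (V : normedModType R) (a x y : V) e s :
  ball a e x -> ball a e y -> 0 <= s <= 1 -> ball a e (x + s *: (y - x)).
Proof.
rewrite -!ball_normE /ball_ /= => ax ay /andP[s0 s1].
have -> : a - (x + s *: (y - x)) = (1 - s) *: (a - x) + s *: (a - y).
  rewrite scalerBl scale1r -addrA [- _ + _]addrC -scalerBr opprD addrA -scalerN.
  by congr (_ + _ *: _); rewrite !opprB [RHS]addrC addrA subrK.
apply: (le_lt_trans (ler_normD _ _)); rewrite !normrZ !ger0_norm ?subr_ge0 //.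
have [->|s_neq1] := eqVneq s 1; first by rewrite subrr mul0r add0r mul1r.
have s_lt1 : s < 1 by rewrite lt_neqAle s_neq1.
apply: (@lt_le_trans _ _ ((1 - s) * e + s * e)); last by rewrite -mulrDl subrK mul1r.
by apply: ltr_leD; [rewrite ltr_pM2l // subr_gt0 | rewrite ler_wpM2l // ltW].
Qed.

Section nowhere_constant_row.
Variables (R : realType) (n : nat).

Lemma open_shift (V : set 'rV[R]_n) a D :
  open V -> V a -> exists2 t : R, 0 < t & V (a + t *: D).
Proof.
move=> oV Va; have : nbhs a V by move: oV; rewrite openE; apply.
move=> /nbhs_ballP[e e0 aeV]; pose t := e / 2 / (`|D| + 1).
have D1 : 0 < `|D| + 1 by rewrite ltr_wpDl.
have t0 : 0 < t by rewrite !divr_gt0.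
exists t => //; apply: aeV.
rewrite -ball_normE /ball_ /= opprD addrA subrr add0r normrN normrZ gtr0_norm //.
apply: (@le_lt_trans _ _ (e / 2)); last by rewrite ltr_pdivrMr // ltr_pMr // ltr1n.
by rewrite /t mulrAC ler_pdivrMr // ler_pM2l ?divr_gt0 // lerDl.
Qed.

Lemma nowhere_constant_id : (0 < n)%N -> nowhere_constant setT (@id 'rV[R]_n).
Proof.
move=> n0 V oV [a Va] _; pose D : 'rV[R]_n := const_mx 1.
have [t t0 VaD] := open_shift D oV Va.
exists (a + t *: D), a; split; [exact: VaD | split => // /eqP].
rewrite -subr_eq0 addrC addKr; apply/negP; rewrite scaler_eq0 negb_or gt_eqF //=.
by apply/eqP => /matrixP/(_ 0 (Ordinal n0)); rewrite !mxE; exact/eqP/oner_neq0.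
Qed.

Lemma nowhere_constant_dotz (q : 'cV[int]_n) :
  q != 0 -> nowhere_constant setT (fun B : 'rV[R]_n => dotz B q).
Proof.
move=> /exists_mx_neq[j [k]]; rewrite ord1 mxE => qj V oV [a Va] _.
have [t t0 VaD] := open_shift (delta_mx 0 j) oV Va.
exists (a + t *: delta_mx 0 j), a; split; [exact: VaD | split => //=].
rewrite dotzD dotzZ dotz_delta_mxl => /eqP; rewrite -subr_eq0 addrC addKr.
by apply/negP; rewrite mulf_eq0 negb_or gt_eqF //= intr_eq0.
Qed.

Lemma approx_err_neq0_dense (q : 'cV[int]_n) (p : 'cV[int]_1) (V : set 'rV[R]_n) :
  (q != 0) || (p != 0) -> open V -> V !=set0 ->
  exists2 B, V B & approx_err B q p != 0.
Proof.
move=> qp oV V0; have [q0|q_neq0] := eqVneq q 0; last first.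
  have qV := nowhere_constant_sub (@subsetT _ V) (nowhere_constant_dotz q_neq0).
  have [B VB Bqp] := nowhere_constant_avoid (p 0 0)%:~R qV oV V0.
  by exists B => //; rewrite approx_err_row_eq0; apply/eqP.
move: qp; rewrite q0 eqxx /= => /exists_mx_neq[i [j]]; rewrite !ord1 mxE => p0.
case: V0 => B VB; exists B => //.
rewrite approx_err_row_eq0 eq_sym /dotz big1 => [|k _]; first by rewrite intr_eq0.
by rewrite mxE mulr0.
Qed.

Lemma exists_ratio_between (a b : R) : a < b ->
  exists (M : nat) (P : int), (0 < M)%N /\ a <= P%:~R / M%:R <= b.
Proof.
move=> ab; pose M := (Num.trunc ((b - a)^-1)).+1; pose P := Num.ceil (M%:R * a).
have M0 : 0 < M%:R :> R by rewrite ltr0n.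
have Mab : 1 < M%:R * (b - a).
  by rewrite -ltr_pdivrMr ?subr_gt0 // mul1r; exact: truncnS_gt.
have Pa : P%:~R - 1 < M%:R * a by have := ceilB1_lt (M%:R * a); rewrite rmorphB.
exists M, P; split => //; rewrite ler_pdivlMr // ler_pdivrMr // mulrC ceil_ge /=.
by rewrite mulrBr in Mab; rewrite (mulrC b); lra.
Qed.

Lemma segment_good_approx N (g : 'rV[R]_n -> 'rV[R]_n) x y :
  (forall s, s \in `[0, 1] -> {for x + s *: (y - x), continuous g}) ->
  g x != g y -> exists2 s, s \in `[0, 1] & good_approx N (g (x + s *: (y - x))).
Proof.
move=> gc /exists_mx_neq[i [j]]; rewrite ord1 => gxy.
pose h s := g (x + s *: (y - x)) 0 j.
have h0 : h 0 = g x 0 j by rewrite /h scale0r addr0.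
have h1 : h 1 = g y 0 j by rewrite /h scale1r addrC subrK.
have hc : {within `[0, 1], continuous h}.
  apply: continuous_in_subspaceT => s s01.
  apply: (@continuous_comp _ _ _ (fun s : R => x + s *: (y - x)) (fun B => g B 0 j)).
    by apply: cvgD; [exact: cvg_cst | apply: cvgZl; exact: cvg_id].
  apply: (@continuous_comp _ _ _ g (fun B : 'rV[R]_n => B 0 j)).
    by apply: gc; move: s01; rewrite inE.
  exact: coord_continuous.
have h01 : Num.min (h 0) (h 1) < Num.max (h 0) (h 1).
  by rewrite h0 h1; case: (ltgtP (g x 0 j) (g y 0 j)) gxy.
have [M [P [M0 hMP]]] := exists_ratio_between h01.
have [s s01 hs] := IVT ler01 hc hMP.
exists s => //.
apply: (@good_approx_exact _ _ _ _ (M%:Z *: delta_mx j 0) (const_mx P)).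
  apply/eqP => /matrixP/(_ j 0); rewrite !mxE !eqxx mulr1.
  by move=> /eqP; rewrite eqz_nat gtn_eqF.
by rewrite dotz_delta_mxr -[g _ 0 j]/(h s) hs mxE divfK // pnatr_eq0 -lt0n.
Qed.

Lemma good_approx_dense N (g : 'rV[R]_n -> 'rV[R]_n) (V : set 'rV[R]_n) :
  open V -> V !=set0 -> {in V, continuous g} -> nowhere_constant V g ->
  exists2 z, V z & good_approx N (g z).
Proof.
move=> oV [a Va] gc gnc.
have /nbhs_ballP[e e0 aeV] : nbhs a V by move: oV; rewrite openE; apply.
have [x [y [ax [ay gxy]]]] := gnc _ (ball_open a e) (ex_intro _ a (ballxx a e0)) aeV.
have segV s : s \in `[0, 1] -> V (x + s *: (y - x)).
  by rewrite in_itv => /= s01; apply/aeV/ball_segment.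
have gcV s (s01 : s \in `[0, 1]) := gc _ (mem_set (segV s s01)).
have [|s s01 gs] := segment_good_approx N gcV; first exact/eqP.
by exists (x + s *: (y - x)); first exact: segV.
Qed.

End nowhere_constant_row.

HB.instance Definition _ (R : realType) (m n : nat) := Complete.on 'M[R]_(m, n).

Section Liouville_conditions.
Variables (R : realType) (n : nat) (f : nat -> 'rV[R]_n -> 'rV[R]_n).

Definition liouville_index :=
  (('cV[int]_n * 'cV[int]_1) + (nat + ((nat * 'M[rat]_(1, n)) + (nat * nat))))%type.

Definition liouville_condition (i : liouville_index) : set 'rV[R]_n :=
  match i with
  | inl (q, p) =>
      if (q != 0) || (p != 0) then [set B | approx_err B q p != 0] else setT
  | inr (inl N) => good_approx N
  | inr (inr (inl (k, r))) => f k @^-1` ~` [set map_mx ratr r]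
  | inr (inr (inr (k, N))) => f k @^-1` good_approx N
  end.

Lemma Liouville_conditionsE :
  [set A | Liouville A /\ forall k, Liouville_star (f k A)] =
  \bigcap_i liouville_condition i.
Proof.
apply/seteqP; split=> [A [[LA LNA] LfA] [[q p]|[N|[[k r]|[k N]]]] _ /=|A cA].
- by case: ifP => // qp; exact: LA.
- exact: LNA.
- by move=> fAr; apply: (LfA k).1 => i j; exists (r i j); rewrite fAr mxE.
- exact: (LfA k).2.
split; first split.
- by move=> q p qp; have := cA (inl (q, p)) Logic.I; rewrite /= qp.
- by move=> N; exact: (cA (inr (inl N))).
move=> k; split=> [fA_rat|N]; last exact: (cA (inr (inr (inr (k, N))))).
pose r := \matrix_(i, j) projT1 (cid (fA_rat i j)).
apply: (cA (inr (inr (inl (k, r))))) => //=; apply/matrixP => i j.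
by rewrite !mxE; exact: projT2 (cid (fA_rat i j)).
Qed.

Lemma open_liouville_condition (U : set 'rV[R]_n) :
  open U -> (forall k, {in U, continuous (f k)}) ->
  forall i, open (U `&` liouville_condition i).
Proof.
move=> oU fU [[q p]|[N|[[k r]|[k N]]]] /=.
- by case: ifP => _; [exact/openI/open_approx_err_neq0 | rewrite setIT].
- exact/openI/open_good_approx.
- by apply: (continuous_inP _ oU).1 => //; exact/open_setC1/norm_hausdorff.
- by apply: (continuous_inP _ oU).1 => //; exact: open_good_approx.
Qed.

Lemma liouville_condition_dense (U : set 'rV[R]_n) :
  (0 < n)%N -> (forall k, {in U, continuous (f k)}) ->
  (forall k, nowhere_constant U (f k)) ->
  forall i V, open V -> V !=set0 -> V `<=` U ->
  V `&` liouville_condition i !=set0.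
Proof.
move=> n0 fU fnc [[q p]|[N|[[k r]|[k N]]]] V oV V0 VU /=.
- case: ifP => qp; last by rewrite setIT.
  by have [B VB Bqp] := approx_err_neq0_dense qp oV V0; exists B.
- have idV := nowhere_constant_sub (@subsetT _ V) (nowhere_constant_id n0).
  by have [B VB BN] := good_approx_dense N oV V0 (fun B _ => cvg_id) idV; exists B.
- have fV := nowhere_constant_sub VU (fnc k).
  by have [B VB fBr] := nowhere_constant_avoid (map_mx ratr r) fV oV V0; exists B.
- have fV := nowhere_constant_sub VU (fnc k).
  have fcV : {in V, continuous (f k)}.
    by move=> B /set_mem/VU/mem_set; exact: fU.
  by have [B VB BN] := good_approx_dense N oV V0 fcV fV; exists B.
Qed.

End Liouville_conditions.

Unset Implicit Arguments.

Theorem theorem5 (R : realType) (n : nat) (U : set 'rV[R]_n)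
  (f : nat -> 'rV[R]_n -> 'rV[R]_n) :
  (0 < n)%N -> open U -> U !=set0 ->
  (forall k, {within U, continuous (f k)}) ->
  (forall k, nowhere_constant U (f k)) ->
  let S := [set A : 'rV[R]_n | U A /\ Liouville A /\
                               forall k, Liouville_star (f k A)] in
  Gdelta S /\ U `<=` closure S.
Proof.
move=> n0 oU _ fc fnc S.
have fU k : {in U, continuous (f k)} by rewrite -continuous_open_subspace.
have -> : S = U `&` \bigcap_i liouville_condition f i by rewrite -Liouville_conditionsE.
apply: Baire_open_subset_countable => // [i|i V oV V0 VU].
  exact: open_liouville_condition.
exact: liouville_condition_dense.
Qed.
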